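(* Let $N=\{1,\dots,n\}$, let $\tilde Q\in\mathbb{R}^{n\times n}$ be symmetric positive definite with smallest eigenvalue $\mu>0$ and spectral norm $\|\tilde Q\|$, $\tilde d\in\mathbb{R}^n$, and $a,b\in\mathbb{R}^n$ with $b\le a$ componentwise. Let $A,B\subseteq N$ be disjoint, $I=N\setminus(A\cup B)$, and let $(x,s,t)$ be the KKT solution for $(A,B)$. Let $C=\{i: x_i<b_i \text{ or } s_i<0\}$, $D=\{i: x_i>a_i \text{ or } t_i>0\}$, and let $(y,u,v)$ be the KKT solution for $(C,D)$. Define $S=\{i\in A: s_i\ge0\}$, $T=\{i\in B: t_i\le 0\}$, $U=\{i\in I: x_i<b_i\}$, $V=\{i\in I: x_i>a_i\}$, $W=U\cup V$, $\overline W=N\setminus W$, $R=I\setminus W$, $K=\{i\in S\cup T\cup R: y_i<b_i\}$, $L=\{i\in S\cup T\cup R: y_i>a_i\}$ and $z=y-x$. Then for all $c,d\ge 0$, $$2\big(L_{c,d}(y,u,v)-L_{c,d}(x,s,t)\big)\le\|\tilde Q\|\,\|z_W\|^2-\mu\|z_{\overline W}\|^2+c\|z_K\|^2+d\|z_L\|^2-c\|z_U\|^2-d\|z_V\|^2.$$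
   Context: For disjoint $A_1,A_2\subseteq N$, the KKT solution for $(A_1,A_2)$ is the unique triple $(x,s,t)\in(\mathbb{R}^n)^3$ with $x_{A_1}=b_{A_1}$, $x_{A_2}=a_{A_2}$, $s_i=0$ for $i\notin A_1$, $t_i=0$ for $i\notin A_2$, and $\tilde Qx+\tilde d+s+t=0$. The merit function is $L_{c,d}(x,s,t)=\tilde J(x)+\frac c2\|g(x)\|^2+\frac d2\|h(x)\|^2$ with $\tilde J(x)=\tfrac12x^{\top}\tilde Qx+\tilde d^{\top}x$, $g(x)=\max(b-x,0)$, $h(x)=\max(x-a,0)$ componentwise. For $M\subseteq N$, $z_M$ is the subvector of $z$ indexed by $M$; $\|\cdot\|$ is the Euclidean norm. *)

From HB Require Import structures.
From mathcomp Require Import all_boot all_order all_algebra.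
From mathcomp Require Import classical_sets reals.
Set Implicit Arguments. Unset Strict Implicit. Unset Printing Implicit Defensive.
Import Order.TTheory GRing.Theory Num.Theory.
Local Open Scope ring_scope.
Local Open Scope classical_set_scope.

Section Defs.
Variables (R : realType) (n : nat).
Implicit Types (x z : 'cV[R]_n) (M : {set 'I_n}) (Q : 'M[R]_n).

Definition subnorm M z : R := Num.sqrt (\sum_(i in M) z i 0 ^+ 2).
Definition enorm z : R := subnorm [set: 'I_n] z.

Definition spectral_norm Q : R :=
  sup [set enorm (Q *m x) | x in [set x | enorm x = 1]].

Definition is_symmetric Q := Q^T = Q.
Definition is_posdef Q := forall x, x != 0 -> 0 < (x^T *m Q *m x) 0 0.

Definition smallest_eigenvalue Q (mu : R) :=
  eigenvalue Q mu /\ forall l, eigenvalue Q l -> mu <= l.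

Definition is_KKT Q (dt : 'cV[R]_n) (a b : 'cV[R]_n) (A1 A2 : {set 'I_n})
  (x s t : 'cV[R]_n) :=
  [/\ forall i, i \in A1 -> x i 0 = b i 0,
      forall i, i \in A2 -> x i 0 = a i 0,
      forall i, i \notin A1 -> s i 0 = 0,
      forall i, i \notin A2 -> t i 0 = 0 &
      Q *m x + dt + s + t = 0].

Definition Jt Q (dt x : 'cV[R]_n) : R :=
  (x^T *m Q *m x) 0 0 / 2 + (dt^T *m x) 0 0.
Definition gfun (b x : 'cV[R]_n) : 'cV[R]_n := \col_i Num.max (b i 0 - x i 0) 0.
Definition hfun (a x : 'cV[R]_n) : 'cV[R]_n := \col_i Num.max (x i 0 - a i 0) 0.

(* merit function L_{c,d}(x,s,t) (it does not depend on s,t) *)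
Definition Lcd Q (dt a b : 'cV[R]_n) (c d : R) (x s t : 'cV[R]_n) : R :=
  Jt Q dt x + c / 2 * enorm (gfun b x) ^+ 2 + d / 2 * enorm (hfun a x) ^+ 2.

End Defs.

From HB Require Import structures.
From mathcomp Require Import all_boot all_order all_algebra.
From mathcomp Require Import classical_sets reals.
From mathcomp Require Import ring lra.
Import Order.TTheory GRing.Theory Num.Theory.
Local Open Scope ring_scope.

Set Implicit Arguments. Unset Strict Implicit. Unset Printing Implicit Defensive.

(* Split z = y - x as z_W + z_Wbar.  Using the KKT equations of both steps,
   2 (J(y) - J(x)) = z_W'Q z_W - z_Wbar'Q z_Wbar - 2 (z_W'(s + t) + z_Wbar'(u + v)),
   and the last two products vanish coordinatewise: on W the multipliers s, t are
   zero, and off W either y_i = x_i or u_i = v_i = 0.  The two quadratic forms are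
   bounded by ||Q|| ||z_W||^2 and mu ||z_Wbar||^2.  For the penalties, y sits on the
   violated bound on U and V, so g(x) = z_U and h(x) = z_V, while g(y) and h(y) live on
   K and L, where b_i <= x_i <= a_i, so they are dominated by z_K and z_L. *)

Lemma quadratic_ge0_discriminant (R : realFieldType) (a b c : R) :
  0 <= c -> (forall t, 0 <= a + 2 * t * b + t ^+ 2 * c) -> b ^+ 2 <= a * c.
Proof.
rewrite le_eqVlt => /predU1P[c0 | c_gt0] H.
  have [-> | b_neq0] := eqVneq b 0; first by rewrite -c0 expr0n mulr0.
  have := H (- (a + 1) / (2 * b)); rewrite -c0 mulr0 addr0.
  have -> : 2 * (- (a + 1) / (2 * b)) * b = - (a + 1) by field.
  lra.
have := H (- b / c).
have -> : a + 2 * (- b / c) * b + (- b / c) ^+ 2 * c = (a * c - b ^+ 2) / c.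
  by field; rewrite gt_eqF.
by rewrite pmulr_lge0 ?invr_gt0 // subr_ge0.
Qed.

Section QuadraticForms.
Variables (R : realType) (n : nat).
Implicit Types (p q r : 'cV[R]_n) (P : 'M[R]_n).

Definition vdot p r : R := (p^T *m r) 0 0.
Definition qform P p r : R := vdot p (P *m r).
Definition mx_l1norm P : R := \sum_i \sum_j `|P i j|.

Lemma vdotE p r : vdot p r = \sum_i p i 0 * r i 0.
Proof. by rewrite /vdot mxE; apply: eq_bigr => i _; rewrite mxE. Qed.

Lemma vdotC p r : vdot p r = vdot r p.
Proof. by rewrite !vdotE; apply: eq_bigr => i _; rewrite mulrC. Qed.

Lemma vdotDl p q r : vdot (p + q) r = vdot p r + vdot q r.
Proof. by rewrite /vdot linearD /= mulmxDl mxE. Qed.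

Lemma vdotDr p q r : vdot p (q + r) = vdot p q + vdot p r.
Proof. by rewrite /vdot mulmxDr mxE. Qed.

Lemma vdotNr p q : vdot p (- q) = - vdot p q.
Proof. by rewrite /vdot mulmxN mxE. Qed.

Lemma vdotNl p q : vdot (- p) q = - vdot p q.
Proof. by rewrite /vdot linearN /= mulNmx mxE. Qed.

Lemma vdotZl k p q : vdot (k *: p) q = k * vdot p q.
Proof. by rewrite /vdot linearZ /= -scalemxAl mxE. Qed.

Lemma vdotZr k p q : vdot p (k *: q) = k * vdot p q.
Proof. by rewrite /vdot -scalemxAr mxE. Qed.

Lemma enorm_sqr p : enorm p ^+ 2 = vdot p p.
Proof.
rewrite /enorm /subnorm sqr_sqrtr ?sumr_ge0 // => [|i _]; last exact: sqr_ge0.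
by rewrite vdotE; apply: eq_big => [i|i _]; rewrite ?inE // expr2.
Qed.

Lemma enorm_col_sqr (f : 'I_n -> R) : enorm (\col_i f i) ^+ 2 = \sum_i f i ^+ 2.
Proof. by rewrite enorm_sqr vdotE; apply: eq_bigr => i _; rewrite mxE expr2. Qed.

Lemma enorm_ge0 p : 0 <= enorm p.
Proof. exact: sqrtr_ge0. Qed.

Lemma vdot_ge0 p : 0 <= vdot p p.
Proof. by rewrite -enorm_sqr sqr_ge0. Qed.

Lemma enormZ k p : enorm (k *: p) = `|k| * enorm p.
Proof.
apply: (@pexpIrn _ 2) => //; rewrite ?nnegrE ?mulr_ge0 ?enorm_ge0 //.
by rewrite exprMn real_normK ?num_real // !enorm_sqr vdotZl vdotZr mulrA -expr2.
Qed.

Lemma normr_coord_le p i : `|p i 0| <= enorm p.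
Proof.
rewrite -(@ler_pXn2r _ 2) ?nnegrE ?enorm_ge0 // real_normK ?num_real //.
rewrite enorm_sqr vdotE (bigD1 i) //= expr2 lerDl.
by apply: sumr_ge0 => j _; rewrite -expr2 sqr_ge0.
Qed.

Lemma qform_sym P p r : P^T = P -> qform P p r = qform P r p.
Proof.
move=> symP; rewrite /qform /vdot.
transitivity ((p^T *m (P *m r))^T 0 0); first by rewrite [RHS]mxE.
by rewrite !trmx_mul trmxK symP mulmxA.
Qed.

Lemma qformE P p : qform P p p = \sum_i \sum_j p i 0 * P i j * p j 0.
Proof.
rewrite /qform vdotE; apply: eq_bigr => i _.
by rewrite mxE mulr_sumr; apply: eq_bigr => j _; rewrite mulrA.
Qed.

Lemma normr_qform_le P p : `|qform P p p| <= mx_l1norm P * enorm p ^+ 2.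
Proof.
rewrite qformE /mx_l1norm mulr_suml; apply: le_trans (ler_norm_sum _ _ _) _.
apply: ler_sum => i _; rewrite mulr_suml; apply: le_trans (ler_norm_sum _ _ _) _.
apply: ler_sum => j _; rewrite !normrM mulrAC mulrC ler_wpM2l // expr2.
by rewrite ler_pM ?normr_coord_le.
Qed.

Lemma qform_CauchySchwarz P p r : P^T = P -> (forall q, 0 <= qform P q q) ->
  qform P p r ^+ 2 <= qform P p p * qform P r r.
Proof.
move=> symP psdP; apply: quadratic_ge0_discriminant => [|k]; first exact: psdP.
have := psdP (p + k *: r); have := qform_sym p r symP.
rewrite /qform mulmxDr -scalemxAr !(vdotDl, vdotDr, vdotZl, vdotZr) => ->.
by congr (0 <= _); ring.
Qed.

Lemma vdot_le_enorm p r : vdot p r <= enorm p * enorm r.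
Proof.
have psd1 q : 0 <= qform 1%:M q q by rewrite /qform mul1mx vdot_ge0.
have := qform_CauchySchwarz p r (trmx1 _ _) psd1.
rewrite /qform !mul1mx -!enorm_sqr -exprMn -real_normK ?num_real //.
rewrite ler_sqr ?nnegrE ?mulr_ge0 ?enorm_ge0 //; exact: le_trans (ler_norm _).
Qed.

Lemma qform_sqrB P p q : P^T = P ->
  qform P p p - qform P q q = qform P (p - q) (p + q).
Proof.
move=> symP; have := qform_sym p q symP.
by rewrite /qform mulmxDr vdotDl !vdotDr !vdotNl => ->; ring.
Qed.

Lemma enorm_mulmx_sqr P p : enorm (P *m p) ^+ 2 = qform (P^T *m P) p p.
Proof. by rewrite enorm_sqr /qform /vdot trmx_mul !mulmxA. Qed.

Lemma spectral_norm_has_sup P p : enorm p = 1 ->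
  has_sup [set enorm (P *m x) | x in [set x | enorm x = 1]]%classic.
Proof.
move=> p1; split; first by exists (enorm (P *m p)), p.
exists (Num.sqrt (mx_l1norm (P^T *m P))) => _ [x /= x1 <-].
rewrite -(ger0_norm (enorm_ge0 _)) -sqrtr_sqr ler_wsqrtr // enorm_mulmx_sqr.
by apply: ler_normlW; rewrite (le_trans (normr_qform_le _ _)) // x1 expr1n mulr1.
Qed.

Lemma enorm_mulmx_le P p : enorm (P *m p) <= spectral_norm P * enorm p.
Proof.
have [p0|p_neq0] := eqVneq (enorm p) 0.
  have : `|enorm (P *m p) ^+ 2| <= 0.
    by rewrite enorm_mulmx_sqr (le_trans (normr_qform_le _ _)) // p0 expr0n mulr0.
  by rewrite normr_le0 sqrf_eq0 p0 mulr0 => /eqP->.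
have p_gt0 : 0 < enorm p by rewrite lt_def p_neq0 enorm_ge0.
pose e := (enorm p)^-1 *: p.
have e1 : enorm e = 1 by rewrite enormZ ger0_norm ?invr_ge0 ?enorm_ge0 ?mulVf.
have := sup_upper_bound (spectral_norm_has_sup P e1) (ex_intro2 _ _ e e1 erefl).
rewrite /e -scalemxAr enormZ ger0_norm ?invr_ge0 ?enorm_ge0 // => le_e.
by rewrite -ler_pdivrMr // mulrC.
Qed.

Lemma qform_le_spectral_norm P p : qform P p p <= spectral_norm P * enorm p ^+ 2.
Proof.
apply: le_trans (vdot_le_enorm p (P *m p)) _.
by rewrite expr2 mulrCA ler_wpM2l ?enorm_ge0 ?enorm_mulmx_le.
Qed.

(* Cauchy-Schwarz for q and P^-1 q: |q|^4 = (q'P(P^-1 q))^2 <= (q'Pq) (q'P^-T q). *)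
Lemma psd_unitmx_coercive P : P^T = P -> (forall q, 0 <= qform P q q) ->
  P \in unitmx -> exists2 k, 0 < k & forall q, k * enorm q ^+ 2 <= qform P q q.
Proof.
move=> symP psdP Punit; set X := invmx P; set M := mx_l1norm X^T + 1.
have M_gt0 : 0 < M.
  by rewrite ltr_pwDr // sumr_ge0 // => i _; apply: sumr_ge0.
exists M^-1 => [|q]; first by rewrite invr_gt0.
set N := enorm q ^+ 2; have [N0|N_neq0] := eqVneq N 0; first by rewrite N0 mulr0.
have N_gt0 : 0 < N by rewrite lt_def N_neq0 sqr_ge0.
have PXq : qform P q (X *m q) = N by rewrite /qform (mulmxA P) mulmxV ?mul1mx -?enorm_sqr.
have XqPXq : qform P (X *m q) (X *m q) = qform X^T q q.
  by rewrite /qform (mulmxA P) mulmxV // mul1mx /vdot trmx_mul mulmxA.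
have X_bound : qform X^T q q <= M * N.
  apply: le_trans (ler_normlW (normr_qform_le _ _)) _.
  by rewrite ler_wpM2r ?sqr_ge0 // lerDl.
have : N ^+ 2 <= qform P q q * (M * N).
  rewrite -{1}PXq; apply: le_trans (qform_CauchySchwarz _ _ symP psdP) _.
  by rewrite XqPXq; apply: ler_wpM2l.
rewrite expr2 mulrA ler_pM2r // => le_N.
by rewrite mulrC ler_pdivrMr.
Qed.

End QuadraticForms.

(* m is the largest lower bound of the Rayleigh quotient: P - m is positive
   semidefinite, and were it invertible it would be coercive, contradicting maximality. *)
Lemma exists_eigenvalue_le_Rayleigh (R : realType) (n : nat) (P : 'M[R]_n.+1) :
  P^T = P -> exists2 m, eigenvalue P m & forall q, m * enorm q ^+ 2 <= qform P q q.
Proof.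
move=> symP.
pose E := [set l : R | forall q, l * enorm q ^+ 2 <= qform P q q]%classic.
pose e0 : 'cV[R]_n.+1 := delta_mx 0 0.
have e0_1 : enorm e0 ^+ 2 = 1.
  rewrite enorm_sqr vdotE (bigD1 0) //= big1 => [|i /negbTE i0]; last by rewrite !mxE i0 mul0r.
  by rewrite !mxE eqxx mulr1 addr0.
have E_sup : has_sup E.
  split; first by exists (- mx_l1norm P) => q; rewrite mulNr lerNnormlW ?normr_qform_le.
  by exists (qform P e0 e0) => l /(_ e0); rewrite e0_1 mulr1.
pose m := sup E.
have m_lb q : m * enorm q ^+ 2 <= qform P q q.
  have [N0|N_neq0] := eqVneq (enorm q ^+ 2) 0.
    by have := normr_qform_le P q; rewrite N0 !mulr0 normr_le0 => /eqP->.
  have N_gt0 : 0 < enorm q ^+ 2 by rewrite lt_def N_neq0 sqr_ge0.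
  rewrite -ler_pdivlMr //; apply: ge_sup; first by case: E_sup.
  by move=> l /(_ q); rewrite ler_pdivlMr.
have qformB q : qform (P - m%:M) q q = qform P q q - m * enorm q ^+ 2.
  by rewrite /qform mulmxBl mul_scalar_mx vdotDr vdotNr vdotZr enorm_sqr.
have symPm : (P - m%:M)^T = P - m%:M by rewrite linearB /= tr_scalar_mx symP.
have psdPm q : 0 <= qform (P - m%:M) q q by rewrite qformB subr_ge0.
have : ~~ (P - m%:M \in unitmx).
  apply/negP => /(psd_unitmx_coercive symPm psdPm) [k k_gt0 Pm_coercive].
  have : E (m + k).
    by move=> q; have := Pm_coercive q; rewrite qformB mulrDl; lra.
  by move/(sup_upper_bound E_sup); rewrite -/m; lra.
rewrite unitmxE unitfE negbK => /det0P [v v_neq0 Pm_v].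
exists m => //; apply/eigenvalueP; exists v => //.
by apply/eqP; rewrite -subr_eq0 -mul_mx_scalar -mulmxBr Pm_v.
Qed.

Lemma smallest_eigenvalue_le_qform (R : realType) (n : nat) (Q : 'M[R]_n) mu p :
  Q^T = Q -> smallest_eigenvalue Q mu -> mu * enorm p ^+ 2 <= qform Q p p.
Proof.
case: n Q p => [|n] Q p symQ [_ mu_min].
  by rewrite enorm_sqr vdotE qformE !big_ord0 mulr0.
have [m m_eig m_lb] := exists_eigenvalue_le_Rayleigh symQ.
by apply: le_trans (m_lb p); rewrite ler_wpM2r ?sqr_ge0 ?mu_min.
Qed.

Section Subvectors.
Variables (R : realType) (n : nat).
Implicit Types (M : {set 'I_n}) (z r : 'cV[R]_n).

(* z_M padded with zeros, so that it lives in the same space as z. *)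
Definition subvec M z : 'cV[R]_n := \col_i (if i \in M then z i 0 else 0).

Lemma subnormE M z : subnorm M z = enorm (subvec M z).
Proof.
rewrite /enorm /subnorm; congr Num.sqrt; rewrite big_mkcond [RHS]big_mkcond.
by apply: eq_bigr => i _; rewrite inE mxE; case: ifP; rewrite ?expr0n.
Qed.

Lemma subnorm_sqr M z : subnorm M z ^+ 2 = \sum_i (if i \in M then z i 0 ^+ 2 else 0).
Proof.
rewrite sqr_sqrtr ?big_mkcond //.
by apply: sumr_ge0 => i _; case: ifP; rewrite ?sqr_ge0.
Qed.

Lemma subvecC M z : subvec M z + subvec (~: M) z = z.
Proof.
by apply/matrixP => i j; rewrite !mxE inE ord1; case: (i \in M); rewrite ?addr0 ?add0r.
Qed.

Lemma vdot_subvec M z r : vdot (subvec M z) r = \sum_(i in M) z i 0 * r i 0.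
Proof.
rewrite vdotE [RHS]big_mkcond; apply: eq_bigr => i _.
by rewrite mxE; case: ifP; rewrite ?mul0r.
Qed.

End Subvectors.

Lemma JtE (R : realType) (n : nat) (Q : 'M[R]_n) (dt p : 'cV[R]_n) :
  Jt Q dt p = qform Q p p / 2 + vdot dt p.
Proof. by rewrite /Jt /qform /vdot mulmxA. Qed.

Lemma Jt_sub_KKT (R : realType) (n : nat) (Q : 'M[R]_n) (dt x y w w' p q : 'cV[R]_n) :
  Q^T = Q -> Q *m x + dt + w = 0 -> Q *m y + dt + w' = 0 -> p + q = y - x ->
  2 * (Jt Q dt y - Jt Q dt x) =
    qform Q p p - qform Q q q - 2 * (vdot p w + vdot q w').
Proof.
move=> symQ Ex Ey Epq.
have Qx : Q *m x = - (dt + w) by apply/eqP; rewrite -addr_eq0 addrA Ex.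
have Qy : Q *m y = - (dt + w') by apply/eqP; rewrite -addr_eq0 addrA Ey.
have dt_yx : vdot dt y - vdot dt x = vdot (p + q) dt.
  by rewrite Epq vdotDl vdotNl !(vdotC dt).
have yx : qform Q y y - qform Q x x = vdot (p + q) (- (dt + w') - (dt + w)).
  by rewrite qform_sqrB // /qform mulmxDr Qx Qy Epq.
have pq : qform Q p p - qform Q q q = vdot (p - q) (- (dt + w') + (dt + w)).
  by rewrite qform_sqrB // /qform Epq mulmxBr Qx Qy opprK.
rewrite !(vdotDl, vdotDr, vdotNl, vdotNr) in dt_yx yx pq.
rewrite !JtE; lra.
Qed.

Section ActiveSetStep.
Variables (R : realType) (n : nat) (Q : 'M[R]_n) (dt a b : 'cV[R]_n).
Variables (A B : {set 'I_n}) (x s t y u v : 'cV[R]_n).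

(* The sets C, D, I, U, V, W, S :|: T :|: R, K, L of the statement. *)
Definition next_lower_set := [set i | (x i 0 < b i 0) || (s i 0 < 0)].
Definition next_upper_set := [set i | (x i 0 > a i 0) || (t i 0 > 0)].
Definition inactive_set := ~: (A :|: B).
Definition lower_violation := [set i in inactive_set | x i 0 < b i 0].
Definition upper_violation := [set i in inactive_set | x i 0 > a i 0].
Definition violation_set := lower_violation :|: upper_violation.
Definition kept_set := [set i in A | s i 0 >= 0] :|: [set i in B | t i 0 <= 0]
  :|: inactive_set :\: violation_set.
Definition lower_overshoot := [set i in kept_set | y i 0 < b i 0].
Definition upper_overshoot := [set i in kept_set | y i 0 > a i 0].

Hypotheses (ba : forall i, b i 0 <= a i 0) (AB : [disjoint A & B])
  (KKTx : is_KKT Q dt a b A B x s t)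
  (KKTy : is_KKT Q dt a b next_lower_set next_upper_set y u v).

Let xA i : i \in A -> x i 0 = b i 0. Proof. by case: KKTx => + _ _ _ _; apply. Qed.
Let xB i : i \in B -> x i 0 = a i 0. Proof. by case: KKTx => _ + _ _ _; apply. Qed.
Let sA i : i \notin A -> s i 0 = 0. Proof. by case: KKTx => _ _ + _ _; apply. Qed.
Let tB i : i \notin B -> t i 0 = 0. Proof. by case: KKTx => _ _ _ + _; apply. Qed.
Let yC i : i \in next_lower_set -> y i 0 = b i 0.
Proof. by case: KKTy => + _ _ _ _; apply. Qed.
Let yD i : i \in next_upper_set -> y i 0 = a i 0.
Proof. by case: KKTy => _ + _ _ _; apply. Qed.
Let u0 i : b i 0 <= x i 0 -> 0 <= s i 0 -> u i 0 = 0.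
Proof.
move=> bx s_ge0; case: KKTy => _ _ + _ _; apply.
by rewrite inE negb_or -!leNgt bx s_ge0.
Qed.
Let v0 i : x i 0 <= a i 0 -> t i 0 <= 0 -> v i 0 = 0.
Proof.
move=> xa t_le0; case: KKTy => _ _ _ + _; apply.
by rewrite inE negb_or -!leNgt xa t_le0.
Qed.

Lemma violation_multipliers0 i : i \in violation_set -> s i 0 + t i 0 = 0.
Proof.
rewrite !inE -andb_orr negb_or => /andP[/andP[iA iB] _].
by rewrite sA // tB // addr0.
Qed.

Lemma bounds_off_violation i : i \notin violation_set -> b i 0 <= x i 0 <= a i 0.
Proof.
have [/xA->|iA] := boolP (i \in A); first by rewrite lexx ba.
have [/xB->|iB] := boolP (i \in B); first by rewrite lexx ba.
by rewrite !inE (negbTE iA) (negbTE iB) /= negb_or -!leNgt.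
Qed.

Lemma b_le_x_off_lower_violation i : i \notin lower_violation -> b i 0 <= x i 0.
Proof.
move=> iU; have [iV|iV] := boolP (i \in upper_violation).
  by move: iV; rewrite inE => /andP[_ /ltW]; apply: le_trans (ba i).
have iW : i \notin violation_set by rewrite finset.in_setU negb_or iU iV.
by case/andP: (bounds_off_violation iW).
Qed.

Lemma x_le_a_off_upper_violation i : i \notin upper_violation -> x i 0 <= a i 0.
Proof.
move=> iV; have [iU|iU] := boolP (i \in lower_violation).
  by move: iU; rewrite inE => /andP[_ /ltW/le_trans]; apply.
have iW : i \notin violation_set by rewrite finset.in_setU negb_or iU iV.
by case/andP: (bounds_off_violation iW).
Qed.

Lemma y_lower_violation i : i \in lower_violation -> y i 0 = b i 0.
Proof. by rewrite inE => /andP[_ xb]; apply: yC; rewrite inE xb. Qed.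

Lemma y_upper_violation i : i \in upper_violation -> y i 0 = a i 0.
Proof. by rewrite inE => /andP[_ ax]; apply: yD; rewrite inE ax. Qed.

Lemma complementarity_off_violation i :
  i \notin violation_set -> (y i 0 - x i 0) * (u i 0 + v i 0) = 0.
Proof.
move=> iW; have /andP[bx xa] := bounds_off_violation iW.
have [iA|iA] := boolP (i \in A).
  have t0 : t i 0 = 0 by rewrite tB ?(disjointFr AB iA).
  have [s_lt0|s_ge0] := ltP (s i 0) 0.
    by rewrite yC ?xA ?subrr ?mul0r // inE s_lt0 orbT.
  by rewrite u0 ?v0 ?t0 ?addr0 ?mulr0.
have [iB|iB] := boolP (i \in B).
  have [t_gt0|t_le0] := ltP 0 (t i 0).
    by rewrite yD ?xB ?subrr ?mul0r // inE t_gt0 orbT.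
  by rewrite u0 ?v0 ?sA ?addr0 ?mulr0.
by rewrite u0 ?v0 ?sA ?tB ?addr0 ?mulr0.
Qed.

Lemma kept_notin_violation i : i \in kept_set -> i \notin violation_set.
Proof.
rewrite !inE => /orP[/orP[/andP[iA _]|/andP[iB _]]|/andP[] //].
  by rewrite iA.
by rewrite iB orbT.
Qed.

Lemma kept_of_y_outside i : (y i 0 < b i 0) || (a i 0 < y i 0) -> i \in kept_set.
Proof.
move=> y_out.
have iC : i \notin next_lower_set.
  by apply: contraL y_out => /yC->; rewrite ltxx /= -leNgt ba.
have iD : i \notin next_upper_set.
  by apply: contraL y_out => /yD->; rewrite ltxx orbF -leNgt ba.
move: iC iD; rewrite !inE !negb_or -!leNgt => /andP[bx s_ge0] /andP[xa t_le0].
rewrite s_ge0 t_le0 !ltNge bx xa /= ?andbT.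
by case: (i \in A); case: (i \in B).
Qed.

Lemma gfun_x_sqr : enorm (gfun b x) ^+ 2 = subnorm lower_violation (y - x) ^+ 2.
Proof.
rewrite enorm_col_sqr subnorm_sqr; apply: eq_bigr => i _; rewrite !mxE.
case: ifP => [iU|/negbT iU].
  have xb : x i 0 < b i 0 by move: iU; rewrite inE => /andP[].
  by rewrite y_lower_violation // max_l // subr_ge0 ltW.
by rewrite max_r ?expr0n // subr_le0 b_le_x_off_lower_violation.
Qed.

Lemma hfun_x_sqr : enorm (hfun a x) ^+ 2 = subnorm upper_violation (y - x) ^+ 2.
Proof.
rewrite enorm_col_sqr subnorm_sqr; apply: eq_bigr => i _; rewrite !mxE.
case: ifP => [iV|/negbT iV].
  have ax : a i 0 < x i 0 by move: iV; rewrite inE => /andP[].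
  by rewrite y_upper_violation // max_l ?subr_ge0 ?ltW // -sqrrN opprB.
by rewrite max_r ?expr0n // subr_le0 x_le_a_off_upper_violation.
Qed.

Lemma gfun_y_sqr_le : enorm (gfun b y) ^+ 2 <= subnorm lower_overshoot (y - x) ^+ 2.
Proof.
rewrite enorm_col_sqr subnorm_sqr; apply: ler_sum => i _; rewrite !mxE.
case: ifP => [iK|/negbT iK].
  move: iK; rewrite inE => /andP[ikept yb].
  have /andP[bx _] := bounds_off_violation (kept_notin_violation ikept).
  by rewrite max_l; [nra | rewrite subr_ge0 ltW].
rewrite max_r ?expr0n // subr_le0 leNgt; apply: contra iK => yb.
by rewrite inE yb andbT kept_of_y_outside // yb.
Qed.

Lemma hfun_y_sqr_le : enorm (hfun a y) ^+ 2 <= subnorm upper_overshoot (y - x) ^+ 2.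
Proof.
rewrite enorm_col_sqr subnorm_sqr; apply: ler_sum => i _; rewrite !mxE.
case: ifP => [iL|/negbT iL].
  move: iL; rewrite inE => /andP[ikept ay].
  have /andP[_ xa] := bounds_off_violation (kept_notin_violation ikept).
  by rewrite max_l; [nra | rewrite subr_ge0 ltW].
rewrite max_r ?expr0n // subr_le0 leNgt; apply: contra iL => ay.
by rewrite inE ay andbT kept_of_y_outside // ay orbT.
Qed.

Lemma Jt_sub_violation_split : Q^T = Q ->
  2 * (Jt Q dt y - Jt Q dt x) =
    qform Q (subvec violation_set (y - x)) (subvec violation_set (y - x))
  - qform Q (subvec (~: violation_set) (y - x)) (subvec (~: violation_set) (y - x)).
Proof.
move=> symQ; case: KKTx KKTy => _ _ _ _ Ex [_ _ _ _ Ey].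
rewrite -addrA in Ex; rewrite -addrA in Ey.
rewrite (Jt_sub_KKT symQ Ex Ey (subvecC violation_set (y - x))).
rewrite !vdot_subvec !big1 ?addr0 ?mulr0 ?subr0 // => i iW; rewrite !mxE.
  by rewrite complementarity_off_violation // -finset.in_setC.
by rewrite violation_multipliers0 // mulr0.
Qed.

End ActiveSetStep.

Theorem mainTheorem4 (R : realType) (n : nat) (Q : 'M[R]_n) (mu : R)
  (dt a b : 'cV[R]_n) (A B : {set 'I_n}) (x s t y u v : 'cV[R]_n) :
  is_symmetric Q -> is_posdef Q -> smallest_eigenvalue Q mu -> 0 < mu ->
  (forall i, b i 0 <= a i 0) ->
  [disjoint A & B] ->
  is_KKT Q dt a b A B x s t ->
  let C := [set i | (x i 0 < b i 0) || (s i 0 < 0)] in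
  let D := [set i | (x i 0 > a i 0) || (t i 0 > 0)] in
  is_KKT Q dt a b C D y u v ->
  let I := ~: (A :|: B) in
  let S := [set i in A | s i 0 >= 0] in
  let T := [set i in B | t i 0 <= 0] in
  let U := [set i in I | x i 0 < b i 0] in
  let V := [set i in I | x i 0 > a i 0] in
  let W := U :|: V in
  let Wbar := ~: W in
  let Rs := I :\: W in
  let K := [set i in S :|: T :|: Rs | y i 0 < b i 0] in
  let L := [set i in S :|: T :|: Rs | y i 0 > a i 0] in
  let z := y - x in
  forall c d : R, 0 <= c -> 0 <= d ->
  2 * (Lcd Q dt a b c d y u v - Lcd Q dt a b c d x s t) <=
    spectral_norm Q * subnorm W z ^+ 2 - mu * subnorm Wbar z ^+ 2
    + c * subnorm K z ^+ 2 + d * subnorm L z ^+ 2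
    - c * subnorm U z ^+ 2 - d * subnorm V z ^+ 2.
Proof.
move=> symQ _ mu_min _ ba AB KKTx C D KKTy I S T U V W Wbar Rs K L z c d c_ge0 d_ge0.
have gx : enorm (gfun b x) ^+ 2 = subnorm U z ^+ 2 := gfun_x_sqr ba KKTx KKTy.
have hx : enorm (hfun a x) ^+ 2 = subnorm V z ^+ 2 := hfun_x_sqr ba KKTx KKTy.
have gy : enorm (gfun b y) ^+ 2 <= subnorm K z ^+ 2 := gfun_y_sqr_le ba KKTx KKTy.
have hy : enorm (hfun a y) ^+ 2 <= subnorm L z ^+ 2 := hfun_y_sqr_le ba KKTx KKTy.
have J : 2 * (Jt Q dt y - Jt Q dt x) =
    qform Q (subvec W z) (subvec W z) - qform Q (subvec Wbar z) (subvec Wbar z).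
  exact: Jt_sub_violation_split ba AB KKTx KKTy symQ.
have upper := qform_le_spectral_norm Q (subvec W z).
have lower := smallest_eigenvalue_le_qform (subvec Wbar z) symQ mu_min.
rewrite -subnormE in upper; rewrite -subnormE in lower.
have := ler_wpM2l c_ge0 gy; have := ler_wpM2l d_ge0 hy.
rewrite /Lcd gx hx; lra.
Qed.
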